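(* Let $U:\mathbb{R}^d\to\mathbb{R}$ be twice continuously differentiable with $\nabla U(0)=0$ and $\sup_x\|\mathrm{D}^2U(x)\|\le\mathtt{L}$, and let $\bar\gamma>0$, $L_{\bar\gamma}=2\mathtt{L}+\bar\gamma\mathtt{L}^2$. Then for any integer $k\ge1$, $\gamma\in(0,\bar\gamma]$ and $x\in\mathbb{R}^d$, $$\int_{\mathbb{R}^d}\|y\|^2Q_\gamma^k(x,dy)\le e^{k\gamma L_{\bar\gamma}}\|x\|^2+2\gamma dk\,e^{(k-1)\gamma L_{\bar\gamma}}.$$
   Context: $Q_\gamma(x,A)=\int\mathbb{1}_A(x-\gamma\nabla U(x)+\sqrt{2\gamma}z)\varphi(z)dz$ is the unadjusted Langevin kernel, $\varphi$ the standard Gaussian density on $\mathbb{R}^d$; $Q_\gamma^k$ is its $k$-th iterate. *)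

From HB Require Import structures.
From mathcomp Require Import all_boot all_order all_algebra.
From mathcomp Require Import all_classical all_reals all_analysis.
Set Implicit Arguments. Unset Strict Implicit. Unset Printing Implicit Defensive.
Import Order.TTheory GRing.Theory Num.Theory.
Import numFieldNormedType.Exports.
Local Open Scope classical_set_scope.
Local Open Scope ring_scope.

Section LangevinDefs.
Variable R : realType.

Definition sqnorm2 (d : nat) (v : 'rV[R]_d) : R := \sum_(i < d) v 0 i ^+ 2.
Definition norm2 (d : nat) (v : 'rV[R]_d) : R := Num.sqrt (sqnorm2 v).

Definition phi1 (t : R) : R := normal_pdf 0 1 t.

(* Integral of a nonnegative (extended-real) function f against the standard
   Gaussian density on R^d, written as the iterated Lebesgue integral
   int ... int f(z_1,...,z_d) phi(z_1)...phi(z_d) dz_1 ... dz_d. *)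
Fixpoint gauss_int (d : nat) : ('rV[R]_d -> \bar R) -> \bar R :=
  match d return ('rV[R]_d -> \bar R) -> \bar R with
  | 0 => fun f => f 0
  | n.+1 => fun f =>
      (\int[@lebesgue_measure R]_(t in [set: R])
         (gauss_int (fun v : 'rV[R]_n => f (row_mx (const_mx t : 'rV[R]_1) v))
          * (phi1 t)%:E))%E
  end.

(* ULA kernel Q_gamma acting on nonnegative functions:
   (Q_gamma f)(x) = int f(x - gamma gradU(x) + sqrt(2 gamma) z) phi(z) dz *)
Definition ula_kernel (d : nat) (gradU : 'rV[R]_d -> 'rV[R]_d) (gamma : R)
  (f : 'rV[R]_d -> \bar R) (x : 'rV[R]_d) : \bar R :=
  gauss_int (fun z => f (x - gamma *: gradU x + Num.sqrt (2 * gamma) *: z)).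

(* k-th iterate: (Q^k f)(x) = int f(y) Q^k(x, dy) *)
Fixpoint ula_iter (d : nat) (gradU : 'rV[R]_d -> 'rV[R]_d) (gamma : R) (k : nat)
  (f : 'rV[R]_d -> \bar R) : 'rV[R]_d -> \bar R :=
  match k with
  | 0 => f
  | k'.+1 => ula_kernel gradU gamma (ula_iter gradU gamma k' f)
  end.

End LangevinDefs.

From HB Require Import structures.
From mathcomp Require Import all_boot all_order all_algebra.
From mathcomp Require Import all_classical all_reals all_analysis.
From mathcomp Require Import ring lra measurable_realfun.
Set Implicit Arguments. Unset Strict Implicit. Unset Printing Implicit Defensive.
Import Order.TTheory GRing.Theory Num.Theory.
Import numFieldNormedType.Exports.
Local Open Scope classical_set_scope.
Local Open Scope ring_scope.

(* Write [V y = |y|^2] and [r = exp (gamma L_gbar)].  Since [gradU 0 = 0], the mean value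
   theorem along the segment [[0, x]] and the Hessian bound give [|gradU x| <= L |x|], hence
   [|x - gamma gradU x|^2 <= (1 + gamma L)^2 |x|^2 <= r |x|^2].  Adding the Gaussian
   increment [sqrt (2 gamma) z] raises the mean of [V] by at most [2 gamma d]: coordinatewise,
   the cross term vanishes by the symmetry [z -> -z] and [E z_i^2 <= 1] by integration by
   parts.  Hence [Q (a V + b) <= a r V + a 2 gamma d + b], and [k] iterations give
   [Q^k V <= r^k V + 2 gamma d (1 + r + ... + r^(k-1)) <= r^k V + 2 gamma d k r^(k-1)]. *)

Section euclidean.
Context {R : realType}.

Lemma sqnorm2_ge0 (d : nat) (v : 'rV[R]_d) : 0 <= sqnorm2 v.
Proof. by apply: sumr_ge0 => i _; rewrite sqr_ge0. Qed.

Lemma sqnorm2_row_mx (m n : nat) (u : 'rV[R]_m) (v : 'rV[R]_n) :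
  sqnorm2 (row_mx u v) = sqnorm2 u + sqnorm2 v.
Proof.
by rewrite /sqnorm2 big_split_ord; congr (_ + _); apply: eq_bigr => i _;
  rewrite ?row_mxEl ?row_mxEr.
Qed.

Lemma sqnorm2_rV1 (u : 'rV[R]_1) : sqnorm2 u = u 0 0 ^+ 2.
Proof. by rewrite /sqnorm2 big_ord1. Qed.

Definition dot (d : nat) (u w : 'rV[R]_d) : R := \sum_(i < d) u 0 i * w 0 i.

Lemma dot0l (d : nat) (w : 'rV[R]_d) : dot 0 w = 0.
Proof. by rewrite /dot big1 // => i _; rewrite mxE mul0r. Qed.

Lemma dotvv (d : nat) (u : 'rV[R]_d) : dot u u = sqnorm2 u.
Proof. by apply: eq_bigr => i _; rewrite expr2. Qed.

Lemma norm2_ge0 (d : nat) (u : 'rV[R]_d) : 0 <= norm2 u.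
Proof. exact: sqrtr_ge0. Qed.

Lemma sqr_norm2 (d : nat) (u : 'rV[R]_d) : norm2 u ^+ 2 = sqnorm2 u.
Proof. by rewrite sqr_sqrtr // sqnorm2_ge0. Qed.

Lemma sqnorm2_subZ (d : nat) (u w : 'rV[R]_d) (t : R) :
  sqnorm2 (u - t *: w) = sqnorm2 u - 2 * t * dot u w + t ^+ 2 * sqnorm2 w.
Proof.
rewrite /sqnorm2 /dot !mulr_sumr -sumrN -!big_split /=.
by apply: eq_bigr => i _; rewrite !mxE; ring.
Qed.

Lemma dot_sqr_le (d : nat) (u w : 'rV[R]_d) : dot u w ^+ 2 <= sqnorm2 u * sqnorm2 w.
Proof.
have [w0|w_neq0] := eqVneq (sqnorm2 w) 0.
  move/eqP: w0; rewrite psumr_eq0 => [/allP w0|i _]; last exact: sqr_ge0.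
  rewrite /dot big1 ?expr0n ?mulr_ge0 ?sqnorm2_ge0 // => i _.
  by move/(_ i (mem_index_enum _)): w0; rewrite sqrf_eq0 => /eqP ->; rewrite mulr0.
have w_gt0 : 0 < sqnorm2 w by rewrite lt_def w_neq0 sqnorm2_ge0.
(* Minimise [t |-> sqnorm2 (u - t w)] at [t = dot u w / sqnorm2 w]. *)
have := sqnorm2_ge0 (u - (dot u w / sqnorm2 w) *: w); rewrite sqnorm2_subZ.
have -> : sqnorm2 u - 2 * (dot u w / sqnorm2 w) * dot u w +
    (dot u w / sqnorm2 w) ^+ 2 * sqnorm2 w = sqnorm2 u - dot u w ^+ 2 / sqnorm2 w.
  by field.
by rewrite subr_ge0 ler_pdivrMr // mulrC.
Qed.

Lemma normr_dot_le (d : nat) (u w : 'rV[R]_d) : `|dot u w| <= norm2 u * norm2 w.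
Proof.
rewrite -sqrtrM ?sqnorm2_ge0 // -sqrtr_sqr ler_sqrt ?mulr_ge0 ?sqnorm2_ge0 //.
exact: dot_sqr_le.
Qed.

Lemma sqnorm2_subZ_le (d : nat) (u w : 'rV[R]_d) (t : R) : 0 <= t ->
  sqnorm2 (u - t *: w) <= (norm2 u + t * norm2 w) ^+ 2.
Proof.
move=> t0; rewrite sqnorm2_subZ sqrrD exprMn !sqr_norm2.
have := normr_dot_le u w; rewrite ler_norml => /andP[+ _].
rewrite lerNl => uw; have := ler_wpM2l t0 uw; nra.
Qed.

Lemma is_derive_coord (V : normedModType R) (m n : nat) (phi : V -> 'M[R]_(m, n))
    (s v : V) (D : 'M[R]_(m, n)) (i : 'I_m) (j : 'I_n) :
  is_derive s v phi D -> is_derive s v (fun r => phi r i j) (D i j).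
Proof.
move=> [dphi <-]; apply: DeriveDef; first exact: (derivable_mxP _ _ _).1 dphi i j.
by rewrite derive_mx // mxE.
Qed.

Lemma is_derive_dotl (V : normedModType R) (d : nat) (phi : V -> 'rV[R]_d) (w : 'rV[R]_d)
    (s v : V) (D : 'rV[R]_d) :
  is_derive s v phi D -> is_derive s v (fun r => dot (phi r) w) (dot D w).
Proof.
move=> dphi.
have -> : (fun r => dot (phi r) w) = \sum_(i < d) (w 0 i \*: (fun r => phi r 0 i)).
  by apply/funext => r; rewrite fct_sumE; apply: eq_bigr => i _; rewrite mulrC.
apply: (is_derive_eq (is_derive_sum (fun i => is_deriveZ (w 0 i) (is_derive_coord 0 i dphi)))).
by apply: eq_bigr => i _; rewrite mulrC.
Qed.

End euclidean.

Section standard_gaussian.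
Context {R : realType}.
Local Notation mu := (@lebesgue_measure R).

Lemma phi1E : @phi1 R = fun t => normal_peak 1 * expR (- (t ^+ 2) / 2).
Proof.
apply/funext => t; rewrite /phi1 normal_pdfE ?oner_neq0 //.
by rewrite /normal_fun subr0 expr1n.
Qed.

Lemma phi1_ge0 (t : R) : 0 <= phi1 t. Proof. exact: normal_pdf_ge0. Qed.

Lemma phi1N (t : R) : phi1 (- t) = phi1 t. Proof. by rewrite phi1E sqrrN. Qed.

Lemma continuous_phi1 : continuous (@phi1 R).
Proof. exact: continuous_normal_pdf (oner_neq0 R). Qed.

Lemma measurable_phi1 : measurable_fun setT (@phi1 R).
Proof. exact: measurable_normal_pdf. Qed.

Lemma integral_phi1 : (\int[mu]_t (phi1 t)%:E = 1)%E.
Proof. exact: integral_normal_pdf. Qed.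

Lemma is_derive_phi1 (t : R) : is_derive t 1 (@phi1 R) (- t * phi1 t).
Proof.
rewrite phi1E.
have dq : is_derive t 1 (fun t : R => - (t ^+ 2) / 2) (- t).
  by apply: is_derive_eq; rewrite !scaler0 add0r /GRing.scale /= !mulr1; field.
have -> : (fun t => normal_peak 1 * expR (- (t ^+ 2) / 2)) =
    normal_peak 1 \*: (expR \o (fun t : R => - (t ^+ 2) / 2)) by [].
apply: (is_derive_eq (is_deriveZ (normal_peak 1) (is_derive1_comp (is_derive_expR _) dq))).
by rewrite /GRing.scale /=; ring.
Qed.

Lemma continuous_sqr_phi1 : continuous (fun t : R => t ^+ 2 * phi1 t).
Proof. by move=> t; apply: cvgM; [exact: exprn_continuous | exact: continuous_phi1]. Qed.

Lemma sqr_phi1_ge0 (t : R) : 0 <= t ^+ 2 * phi1 t.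
Proof. by rewrite mulr_ge0 ?sqr_ge0 ?phi1_ge0. Qed.

(* Integration by parts with [(-phi1)' = t phi1]: the boundary term [-b phi1 b] is nonpositive. *)
Lemma integral_itv_sqr_phi1_le (b : R) : 0 < b ->
  (\int[mu]_(t in `[0%R, b]) (t ^+ 2 * phi1 t)%:E <=
   \int[mu]_(t in `[0%R, +oo[) (phi1 t)%:E)%E.
Proof.
move=> b0.
have is_derive_Nphi1 (t : R) : is_derive t 1 (fun t => - phi1 t) (t * phi1 t).
  by apply: is_derive_eq; [exact/is_deriveN/is_derive_phi1 | rewrite mulNr opprK].
have id_deriv : derivable_oo_LRcontinuous (@id R) 0 b.
  by split; [move=> ? _; exact: derivable_id | exact: cvg_at_right_filter | exact: cvg_at_left_filter].
have id_derive1 : {in `]0%R, b[, (@id R)^`()%classic =1 cst 1}.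
  by move=> ? _; rewrite derive1_id.
have tphi1_cont : {within `[0%R, b], continuous (fun t : R => t * phi1 t)}.
  by apply: continuous_subspaceT => t; apply: cvgM; [exact: cvg_id | exact: continuous_phi1].
have Nphi1_deriv : derivable_oo_LRcontinuous (fun t : R => - phi1 t) 0 b.
  by split; [move=> t _; exact: (@ex_derive _ _ _ _ _ _ _ (is_derive_Nphi1 t))
            | apply: cvg_at_right_filter; apply: cvgN; exact: continuous_phi1
            | apply: cvg_at_left_filter; apply: cvgN; exact: continuous_phi1].
have Nphi1_derive1 : {in `]0%R, b[, (fun t : R => - phi1 t)^`()%classic =1 (fun t => t * phi1 t)}.
  by move=> t _; rewrite derive.derive1E; exact: (@derive_val _ _ _ _ _ _ _ (is_derive_Nphi1 t)).
have := integration_by_parts b0 (continuous_subspaceT (fun _ => cvg_cst _))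
  id_deriv id_derive1 tphi1_cont Nphi1_deriv Nphi1_derive1 => ibp.
under eq_integral do rewrite expr2 -mulrA.
rewrite ibp; under eq_integral do rewrite /= mul1r EFinN.
rewrite integral_ge0N; last by move=> t _; rewrite lee_fin phi1_ge0.
rewrite mul0r subr0 oppeK; apply: le_trans; first apply: geeDr.
  by rewrite lee_fin mulrN oppr_le0 mulr_ge0 ?phi1_ge0 ?ltW.
apply: ge0_subset_integral => //=.
- by apply/measurable_EFinP/measurable_funTS; exact: measurable_phi1.
- by move=> t _; rewrite lee_fin phi1_ge0.
- by apply: subset_itvl; rewrite bnd_simp.
Qed.

Lemma integral_sqr_phi1_le1 : (\int[mu]_t (t ^+ 2 * phi1 t)%:E <= 1)%E.
Proof.
rewrite (ge0_symfun_integralT sqr_phi1_ge0 continuous_sqr_phi1); last first.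
  by move=> t /=; rewrite sqrrN phi1N.
rewrite -integral_phi1 (ge0_symfun_integralT phi1_ge0 continuous_phi1); last first.
  by move=> t /=; rewrite phi1N.
rewrite -!set_itvcy; apply: lee_wpmul2l => //.
rewrite (ge0_integral_ereal_sup _ sqr_phi1_ge0); last first.
  exact: continuous_measurable_fun continuous_sqr_phi1.
by apply: ge_ereal_sup => _ [n _ <-]; apply: integral_itv_sqr_phi1_le.
Qed.

Lemma ge0_integralT_oppr (f : R -> \bar R) : measurable_fun setT f ->
  (forall t, (0 <= f t)%E) -> (\int[mu]_t f (- t)%R = \int[mu]_t f t)%E.
Proof.
move=> mf f0; symmetry.
transitivity (\int[pushforward mu (-%R : _ -> measurableTypeR R)]_y f y)%E.
  by apply: eq_measure_integral => A mA _; exact/esym/lebesgue_measureN.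
by rewrite ge0_integral_pushforward.
Qed.

Lemma integral_quadratic_phi1_le (p q : R) : 0 <= p -> 0 <= q ->
  (\int[mu]_t ((p + q * t ^+ 2) * phi1 t)%:E <= (p + q)%:E)%E.
Proof.
move=> p0 q0.
have mphi1 : measurable_fun setT (fun t : R => (phi1 t)%:E).
  by apply/measurable_EFinP; exact: measurable_phi1.
have mt2phi1 : measurable_fun setT (fun t : R => (t ^+ 2 * phi1 t)%:E).
  by apply/measurable_EFinP; exact: continuous_measurable_fun continuous_sqr_phi1.
under eq_integral do rewrite mulrDl -mulrA EFinD !EFinM.
rewrite ge0_integralD //; last 4 first.
- by move=> t _; rewrite -EFinM lee_fin mulr_ge0 ?phi1_ge0.
- exact: measurable_funeM.
- by move=> t _; rewrite -EFinM lee_fin mulr_ge0 ?sqr_phi1_ge0.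
- exact: measurable_funeM.
rewrite !ge0_integralZl // ?lee_fin //; last 2 first.
- by move=> t _; rewrite lee_fin sqr_phi1_ge0.
- by move=> t _; rewrite lee_fin phi1_ge0.
rewrite integral_phi1 mule1 EFinD leeD2l //.
by rewrite -[leRHS]mule1 lee_wpmul2l ?lee_fin ?integral_sqr_phi1_le1.
Qed.

(* Averaging over [t] and [-t] kills the cross term [2 c s t], whose integrability we never need. *)
Lemma integral_sqr_affine_phi1_le (K a c s : R) : 0 <= K -> 0 <= a ->
  (\int[mu]_t ((K + a * (c + s * t) ^+ 2)%:E * (phi1 t)%:E) <=
   (K + a * (c ^+ 2 + s ^+ 2))%:E)%E.
Proof.
move=> K0 a0.
pose h (t : R) := (K + a * (c + s * t) ^+ 2) * phi1 t.
have h0 (t : R) : 0 <= h t by rewrite mulr_ge0 ?phi1_ge0 // addr_ge0 // mulr_ge0 ?sqr_ge0.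
have ch : continuous h.
  move=> t; apply: cvgM; last exact: continuous_phi1.
  apply: cvgD; first exact: cvg_cst.
  apply: cvgMr; apply: (@continuous_comp _ _ _ (fun t => c + s * t) (fun y => y ^+ 2)).
    by apply: cvgD; [exact: cvg_cst | apply: cvgMr; exact: cvg_id].
  exact: exprn_continuous.
have mh : measurable_fun setT (fun t => (h t)%:E).
  by apply/measurable_EFinP; exact: continuous_measurable_fun.
have mhN : measurable_fun setT (fun t : R => (h (- t))%:E).
  apply/measurable_EFinP; apply: continuous_measurable_fun => t.
  by apply: (@continuous_comp _ _ _ -%R h); [exact: cvgN cvg_id | exact: ch].
pose I := (\int[mu]_t (h t)%:E)%E.
have -> : (\int[mu]_t ((K + a * (c + s * t) ^+ 2)%:E * (phi1 t)%:E) = I)%E.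
  by apply: eq_integral => t _; rewrite EFinM.
have I0 : (0 <= I)%E by apply: integral_ge0 => t _; rewrite lee_fin.
have twoI_le : (I + I <= (2 * (K + a * c ^+ 2) + 2 * a * s ^+ 2)%:E)%E.
  rewrite {1}/I -(ge0_integralT_oppr mh) // -ge0_integralD //;
    try by move=> t _; rewrite lee_fin.
  have -> : (\int[mu]_t ((h (- t))%:E + (h t)%:E) =
      \int[mu]_t ((2 * (K + a * c ^+ 2) + 2 * a * s ^+ 2 * t ^+ 2) * phi1 t)%:E)%E.
    by apply: eq_integral => t _; rewrite -EFinD /h phi1N; congr EFin; ring.
  apply: integral_quadratic_phi1_le.
    by rewrite mulr_ge0 // addr_ge0 // mulr_ge0 ?sqr_ge0.
  by rewrite mulr_ge0 ?sqr_ge0 // mulr_ge0.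
move: twoI_le I0; case: I => [r| |] //=; rewrite -EFinD !lee_fin => twoI_le _; lra.
Qed.

End standard_gaussian.

Section gauss_int.
Context {R : realType}.
Local Notation mu := (@lebesgue_measure R).

(* Unlike [ge0_le_integral], no measurability is required: iterated [gauss_int]
   integrands are never shown to be measurable. *)
Lemma ge0_le_integralT (f g : R -> \bar R) :
  (forall t, 0 <= f t)%E -> (forall t, f t <= g t)%E ->
  (\int[mu]_t f t <= \int[mu]_t g t)%E.
Proof.
move=> f0 fg; rewrite !ge0_integralTE // => [|t]; last exact: le_trans (f0 t) (fg t).
apply: le_ereal_sup => _ [h hf <-]; exists h => //= t.
exact: le_trans (hf t) (fg t).
Qed.

Lemma gauss_int_ge0 (d : nat) (f : 'rV[R]_d -> \bar R) :
  (forall z, 0 <= f z)%E -> (0 <= gauss_int f)%E.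
Proof.
elim: d f => [|n IH] f f0 /=; first exact: f0.
apply: integral_ge0 => t _; apply: mule_ge0; last by rewrite lee_fin phi1_ge0.
by apply: IH => v; exact: f0.
Qed.

Lemma le_gauss_int (d : nat) (f g : 'rV[R]_d -> \bar R) :
  (forall z, 0 <= f z)%E -> (forall z, f z <= g z)%E -> (gauss_int f <= gauss_int g)%E.
Proof.
elim: d f g => [|n IH] f g f0 fg /=; first exact: fg.
apply: ge0_le_integralT => t.
  by apply: mule_ge0; [exact: gauss_int_ge0 | rewrite lee_fin phi1_ge0].
by apply: lee_wpmul2r; [rewrite lee_fin phi1_ge0 | exact: IH].
Qed.

Lemma gauss_int_sqnorm2_affine_le (d : nat) (a s : R) (c : 'rV[R]_d) (b : R) :
  0 <= a -> 0 <= b ->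
  (gauss_int (fun z => (a * sqnorm2 (c + s *: z) + b)%:E) <=
   (a * (sqnorm2 c + d%:R * s ^+ 2) + b)%:E)%E.
Proof.
move=> a0; elim: d c b => [|n IH] c b b0 /=.
  by rewrite /sqnorm2 !big_ord0 mul0r addr0.
have sqnorm2_c : sqnorm2 c =
    lsubmx (c : 'rV_(1 + n)) 0 0 ^+ 2 + sqnorm2 (rsubmx (c : 'rV_(1 + n))).
  by rewrite -sqnorm2_rV1 -sqnorm2_row_mx hsubmxK.
set c0 := lsubmx (c : 'rV_(1 + n)) 0 0; set c' := rsubmx (c : 'rV_(1 + n)).
have split_first (t : R) :
    (fun v => (a * sqnorm2 (c + s *: row_mx (const_mx t : 'rV_1) v) + b)%:E) =
    (fun v => (a * sqnorm2 (c' + s *: v) + (a * (c0 + s * t) ^+ 2 + b))%:E).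
  apply/funext => v.
  have -> : (c : 'rV_(1 + n)) + s *: row_mx (const_mx t : 'rV_1) v =
      row_mx (lsubmx (c : 'rV_(1 + n)) + s *: const_mx t) (c' + s *: v) :> 'rV_(1 + n).
    by rewrite -[c in LHS](hsubmxK (c : 'rV_(1 + n))) scale_row_mx add_row_mx.
  rewrite (sqnorm2_row_mx (lsubmx (c : 'rV_(1 + n)) + s *: const_mx t)) sqnorm2_rV1.
  by rewrite /c0 !mxE; congr EFin; ring.
apply: le_trans (_ : \int[mu]_t
    ((a * (sqnorm2 c' + n%:R * s ^+ 2) + b + a * (c0 + s * t) ^+ 2)%:E * (phi1 t)%:E) <= _)%E.
  apply: ge0_le_integralT => t; rewrite split_first.
    apply: mule_ge0; last by rewrite lee_fin phi1_ge0.
    apply: gauss_int_ge0 => v; rewrite lee_fin.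
    by apply: addr_ge0; [apply: mulr_ge0 => //; exact: sqnorm2_ge0 | rewrite addr_ge0 // mulr_ge0 ?sqr_ge0].
  apply: lee_wpmul2r; first by rewrite lee_fin phi1_ge0.
  apply: le_trans (IH _ _ _) _; first by rewrite addr_ge0 // mulr_ge0 ?sqr_ge0.
  by rewrite lee_fin; lra.
apply: le_trans (integral_sqr_affine_phi1_le c0 s _ a0) _.
  by rewrite addr_ge0 // mulr_ge0 // addr_ge0 ?sqnorm2_ge0 // mulr_ge0 ?sqr_ge0.
by rewrite lee_fin sqnorm2_c -/c0 -/c' -natr1 le_eqVlt; apply/orP; left; apply/eqP; ring.
Qed.

End gauss_int.

Section lipschitz_gradient.
Context {R : realType} (d : nat).
Variables (gradU : 'rV[R]_d -> 'rV[R]_d) (hessU : 'rV[R]_d -> 'M[R]_d) (L : R).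
Hypothesis gradU_diff : forall x, differentiable gradU x /\
  ('d gradU x : 'rV[R]_d -> 'rV[R]_d) = (fun h => h *m hessU x).
Hypothesis gradU0 : gradU 0 = 0.
Hypothesis hessU_le : forall x v, norm2 (v *m hessU x) <= L * norm2 v.

Lemma opnorm_bound_ge0 : (0 < d)%N -> 0 <= L.
Proof.
move=> d_gt0; set v : 'rV[R]_d := const_mx 1.
have v_gt0 : 0 < norm2 v.
  rewrite sqrtr_gt0 /sqnorm2 (eq_bigr (fun=> 1)) => [|i _]; last by rewrite mxE expr1n.
  by rewrite sumr_const card_ord ltr0n.
by have := le_trans (norm2_ge0 _) (hessU_le 0 v); rewrite pmulr_lge0.
Qed.

Lemma is_derive_gradU_ray (x : 'rV[R]_d) (s : R) :
  is_derive s 1 (fun r => gradU (r *: x)) (x *m hessU (s *: x)).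
Proof.
have [dscale dscaleE] := is_diff_scalel s x.
have dgrad := (gradU_diff (s *: x)).1.
have -> : (fun r => gradU (r *: x)) = gradU \o ( *:%R^~ x) by [].
have dray : differentiable (gradU \o *:%R^~ x) s := differentiable_comp dscale dgrad.
apply: DeriveDef; first exact/derivable1_diffP.
by rewrite deriveE // diff_comp // (gradU_diff _).2 dscaleE /= scale1r.
Qed.

Lemma dot_gradU_mvt (x w : 'rV[R]_d) :
  exists c : R, dot (gradU x) w = dot (x *m hessU (c *: x)) w.
Proof.
pose g r := dot (gradU (r *: x)) w.
have dg (r : R) : is_derive r 1 g (dot (x *m hessU (r *: x)) w).
  exact/is_derive_dotl/is_derive_gradU_ray.
have cg : {within `[0, 1], continuous g}.
  by apply: derivable_within_continuous => r _; exact: (@ex_derive _ _ _ _ _ _ _ (dg r)).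
have [c _] := MVT ltr01 (fun r _ => dg r) cg.
by rewrite /g scale0r gradU0 dot0l scale1r !subr0 mulr1 => ->; exists c.
Qed.

Lemma norm2_gradU_le (x : 'rV[R]_d) : norm2 (gradU x) <= L * norm2 x.
Proof.
have [c gradU_sqr] := dot_gradU_mvt x (gradU x); rewrite dotvv in gradU_sqr.
have [->|g_neq0] := eqVneq (norm2 (gradU x)) 0.
  exact: le_trans (norm2_ge0 _) (hessU_le 0 x).
have g_gt0 : 0 < norm2 (gradU x) by rewrite lt_def g_neq0 norm2_ge0.
rewrite -(ler_pM2r g_gt0) -expr2 sqr_norm2 gradU_sqr.
apply: le_trans (ler_norm _) _; apply: le_trans (normr_dot_le _ _) _.
by apply: ler_wpM2r; [exact: norm2_ge0 | exact: hessU_le].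
Qed.

Lemma sqnorm2_drift_le (gamma : R) (x : 'rV[R]_d) : 0 <= gamma ->
  sqnorm2 (x - gamma *: gradU x) <= (1 + gamma * L) ^+ 2 * sqnorm2 x.
Proof.
move=> gamma0; apply: le_trans (sqnorm2_subZ_le _ _ gamma0) _.
have step_ge0 : 0 <= norm2 x + gamma * norm2 (gradU x).
  by rewrite addr_ge0 ?mulr_ge0 ?norm2_ge0.
have step_le : norm2 x + gamma * norm2 (gradU x) <= (1 + gamma * L) * norm2 x.
  by rewrite mulrDl mul1r lerD2l -mulrA ler_wpM2l // norm2_gradU_le.
rewrite -sqr_norm2 -exprMn lerXn2r // nnegrE //; exact: le_trans step_le.
Qed.

End lipschitz_gradient.

Lemma sum_expr_le {R : numDomainType} (r : R) (k : nat) : 1 <= r ->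
  \sum_(j < k) r ^+ j <= k%:R * r ^+ k.-1.
Proof.
move=> r1; rewrite mulr_natl -[X in _ *+ X](card_ord k) -sumr_const.
by apply: ler_sum => j _; apply: ler_weXn2l; rewrite // -ltnS (ltn_predK (ltn_ord j)).
Qed.

Section ula_second_moment.
Context {R : realType} (d : nat).
Variables (gradU : 'rV[R]_d -> 'rV[R]_d) (gamma r : R).
Hypothesis gamma_gt0 : 0 < gamma.
Hypothesis r_ge0 : 0 <= r.
Hypothesis drift_le : forall y, sqnorm2 (y - gamma *: gradU y) <= r * sqnorm2 y.

Lemma ula_iter_ge0 (k : nat) (f : 'rV[R]_d -> \bar R) :
  (forall y, 0 <= f y)%E -> forall x, (0 <= ula_iter gradU gamma k f x)%E.
Proof. by move=> f0; elim: k => [|k IH] x //=; apply: gauss_int_ge0. Qed.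

Lemma le_ula_kernel (f g : 'rV[R]_d -> \bar R) (x : 'rV[R]_d) :
  (forall y, 0 <= f y)%E -> (forall y, f y <= g y)%E ->
  (ula_kernel gradU gamma f x <= ula_kernel gradU gamma g x)%E.
Proof. by move=> f0 fg; apply: le_gauss_int. Qed.

(* The Gaussian increment [sqrt (2 gamma) z] adds [d * sqrt (2 gamma) ^+ 2 = 2 gamma d]. *)
Lemma ula_kernel_sqnorm2_le (A B : R) (x : 'rV[R]_d) : 0 <= A -> 0 <= B ->
  (ula_kernel gradU gamma (fun y => (A * sqnorm2 y + B)%:E) x <=
   (A * r * sqnorm2 x + (B + A * (2 * gamma * d%:R)))%:E)%E.
Proof.
move=> A0 B0; apply: le_trans (gauss_int_sqnorm2_affine_le _ _ A0 B0) _.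
rewrite sqr_sqrtr ?mulr_ge0 ?(ltW gamma_gt0) // lee_fin.
have := ler_wpM2l A0 (drift_le x); rewrite mulrA; lra.
Qed.

Lemma ula_iter_sqnorm2_le (k : nat) (x : 'rV[R]_d) :
  (ula_iter gradU gamma k (fun y => (sqnorm2 y)%:E) x <=
   (r ^+ k * sqnorm2 x + 2 * gamma * d%:R * \sum_(j < k) r ^+ j)%:E)%E.
Proof.
have sqnorm2_ge0E (y : 'rV[R]_d) : (0 <= (sqnorm2 y)%:E)%E by rewrite lee_fin sqnorm2_ge0.
elim: k x => [|k IH] x /=; first by rewrite expr0 mul1r big_ord0 mulr0 addr0.
apply: le_trans (le_ula_kernel x (ula_iter_ge0 k sqnorm2_ge0E) IH) _.
have B_ge0 : 0 <= 2 * gamma * d%:R * \sum_(j < k) r ^+ j.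
  by rewrite !mulr_ge0 ?ler0n ?(ltW gamma_gt0) ?sumr_ge0 // => j _; rewrite exprn_ge0.
apply: le_trans (ula_kernel_sqnorm2_le x (exprn_ge0 k r_ge0) B_ge0) _.
by rewrite -exprSr big_ord_recr /= mulrDr [_ * r ^+ k]mulrC.
Qed.

End ula_second_moment.

Theorem lemma7 (R : realType) (d : nat) (U : 'rV[R]_d -> R)
  (gradU : 'rV[R]_d -> 'rV[R]_d) (hessU : 'rV[R]_d -> 'M[R]_d) (L gbar : R) :
  (* U is differentiable with gradient gradU *)
  (forall x, differentiable U x /\
     ('d U x : 'rV[R]_d -> R) = (fun h => \sum_(i < d) h 0 i * gradU x 0 i)) ->
  (* gradU is differentiable with derivative given by the Hessian hessU *)
  (forall x, differentiable gradU x /\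
     ('d gradU x : 'rV[R]_d -> 'rV[R]_d) = (fun h => h *m hessU x)) ->
  (* the Hessian is continuous (U is C^2) *)
  continuous hessU ->
  gradU 0 = 0 ->
  (* sup_x ||D^2 U(x)|| <= L  (operator norm w.r.t. the Euclidean norm) *)
  (forall x v, norm2 (v *m hessU x) <= L * norm2 v) ->
  0 < gbar ->
  forall (k : nat) (gamma : R) (x : 'rV[R]_d),
  (1 <= k)%N -> 0 < gamma -> gamma <= gbar ->
  let Lg := 2 * L + gbar * L ^+ 2 in
  (ula_iter gradU gamma k (fun y => (sqnorm2 y)%:E) x <=
    (expR (k%:R * gamma * Lg) * sqnorm2 x
     + 2 * gamma * d%:R * k%:R * expR ((k%:R - 1) * gamma * Lg))%:E)%E.
Proof.
move=> _ gradU_diff _ gradU0 hessU_le _ k gamma x k_ge1 gamma_gt0 gamma_le /=.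
have gamma_ge0 := ltW gamma_gt0.
set Lg := 2 * L + gbar * L ^+ 2; set r := expR (gamma * Lg).
have growth_le : (1 + gamma * L) ^+ 2 <= 1 + gamma * Lg.
  have := ler_wpM2r (sqr_ge0 L) (ler_wpM2l gamma_ge0 gamma_le); rewrite /Lg; nra.
have drift_le y : sqnorm2 (y - gamma *: gradU y) <= r * sqnorm2 y.
  apply: le_trans (sqnorm2_drift_le gradU_diff gradU0 hessU_le _ gamma_ge0) _.
  apply: ler_wpM2r; first exact: sqnorm2_ge0.
  exact: le_trans growth_le (expR_ge1Dx _).
apply: le_trans (ula_iter_sqnorm2_le gamma_gt0 (expR_ge0 _) drift_le k x) _.
rewrite lee_fin -expRM_natl mulrA lerD2l.
have [d0 | d_gt0] := posnP d; first by rewrite d0 mulr0n !mulr0 !mul0r.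
have Lg_ge0 : 0 <= Lg.
  by rewrite addr_ge0 ?mulr_ge0 ?sqr_ge0 ?(le_trans gamma_ge0 gamma_le)
    ?(opnorm_bound_ge0 hessU_le d_gt0).
rewrite -!mulrA !ler_wpM2l ?ler0n //.
have -> : k%:R - 1 = k.-1%:R :> R by rewrite -[in LHS](prednK k_ge1) -natr1 addrK.
rewrite expRM_natl.
by apply: sum_expr_le; rewrite -expR0 ler_expR mulr_ge0.
Qed.
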